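(* Let $R$ be a commutative multiplicative hyperring with identity, let $\alpha$ be a good endomorphism of $R$, and let $I$ be a hyperideal of $R$. Then the following are equivalent: - $I$ is $\alpha$-prime; - for all hyperideals $I_1,I_2$ of $R$, $I_1\circ I_2\subseteq I$ implies $I_1\subseteq I$ or $\alpha(I_2)\subseteq I$.
   Context: A multiplicative hyperring is an abelian group $(R,+)$ with a hyperoperation $\circ:R\times R\to \mathcal P^*(R)$ (nonempty subsets) such that $a\circ(b\circ c)=(a\circ b)\circ c$, $a\circ(b+c)\subseteq a\circ b+a\circ c$, $(b+c)\circ a\subseteq b\circ a+c\circ a$, and $a\circ(-b)=(-a)\circ b=-(a\circ b)$. Products of subsets are unions of elementwise products; in particular $I_1\circ I_2=\bigcup_{a\in I_1,b\in I_2}a\circ b$. Commutative means $a\circ b=b\circ a$. An identity $1$ satisfies $a\in 1\circ a$ for all $a$. A hyperideal is a nonempty $I\subseteq R$ closed under subtraction with $r\circ x\subseteq I$ for $r\in R$, $x\in I$. Standing assumption: every hyperideal is a $\mathbf C$-hyperideal, i.e. for every finite product $A=r_1\circ\cdots\circ r_n$, $A\cap I\ne\emptyset$ implies $A\subseteq I$. A good endomorphism $\alpha$ satisfies $\alpha(x+y)=\alpha(x)+\alpha(y)$ and $\alpha(x\circ y)=\alpha(x)\circ\alpha(y)$; it is applied to sets elementwise. A hyperideal $I$ is $\alpha$-prime if for all $x,y$, $x\circ y\subseteq I$ implies $x\in I$ or $\alpha(y)\in I$. *)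

From mathcomp Require Import all_boot all_algebra.
Set Implicit Arguments. Unset Strict Implicit. Unset Printing Implicit Defensive.
Import GRing.Theory.
Local Open Scope ring_scope.

(* Subsets of R are predicates R -> Prop. A hyperoperation is
   hmul : R -> R -> (R -> Prop); z \in a o b  iff  hmul a b z. *)
Definition hset (R : Type) := R -> Prop.

Definition hsubset {R : Type} (A B : hset R) : Prop := forall x, A x -> B x.

Definition hprod {R : Type} (hmul : R -> R -> hset R) (A B : hset R) : hset R :=
  fun z => exists a b, A a /\ B b /\ hmul a b z.

Definition hsum {R : zmodType} (A B : hset R) : hset R :=
  fun z => exists a b, A a /\ B b /\ z = a + b.

Definition hopp {R : zmodType} (A : hset R) : hset R := fun z => A (- z).

Definition hsingle {R : Type} (a : R) : hset R := fun z => z = a.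

Definition himage {R : Type} (f : R -> R) (A : hset R) : hset R :=
  fun z => exists a, A a /\ z = f a.

Definition is_mult_hyperring (R : zmodType) (hmul : R -> R -> hset R) : Prop :=
  (forall a b, exists z, hmul a b z) /\
  (forall a b c, forall z,
      hprod hmul (hsingle a) (hmul b c) z <-> hprod hmul (hmul a b) (hsingle c) z) /\
  (forall a b c, hsubset (hmul a (b + c)) (hsum (hmul a b) (hmul a c))) /\
  (forall a b c, hsubset (hmul (b + c) a) (hsum (hmul b a) (hmul c a))) /\
  (forall a b z, hmul a (- b) z <-> hopp (hmul a b) z) /\
  (forall a b z, hmul (- a) b z <-> hopp (hmul a b) z).

Definition hcommutative {R : Type} (hmul : R -> R -> hset R) : Prop :=
  forall a b z, hmul a b z <-> hmul b a z.

Definition has_identity {R : Type} (hmul : R -> R -> hset R) (one : R) : Prop :=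
  forall a, hmul one a a.

Definition is_hyperideal {R : zmodType} (hmul : R -> R -> hset R) (I : hset R) : Prop :=
  (exists x, I x) /\
  (forall x y, I x -> I y -> I (x - y)) /\
  (forall r x, I x -> hsubset (hmul r x) I).

(* Finite product r1 o r2 o ... o rn (n >= 1), r :: rs = r1 :: [r2..rn],
   associated to the left. *)
Fixpoint fprod_aux {R : Type} (hmul : R -> R -> hset R) (acc : hset R) (rs : seq R)
  : hset R :=
  match rs with
  | [::] => acc
  | r' :: rs' => fprod_aux hmul (hprod hmul acc (hsingle r')) rs'
  end.

Definition fin_hprod {R : Type} (hmul : R -> R -> hset R) (r : R) (rs : seq R) : hset R :=
  fprod_aux hmul (hsingle r) rs.

Definition is_C_hyperideal {R : zmodType} (hmul : R -> R -> hset R) (I : hset R) : Prop :=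
  is_hyperideal hmul I /\
  forall r rs, (exists z, fin_hprod hmul r rs z /\ I z) -> hsubset (fin_hprod hmul r rs) I.

Definition good_endo {R : zmodType} (hmul : R -> R -> hset R) (alpha : R -> R) : Prop :=
  (forall x y, alpha (x + y) = alpha x + alpha y) /\
  (forall x y z, himage alpha (hmul x y) z <-> hmul (alpha x) (alpha y) z).

Definition alpha_prime {R : zmodType} (hmul : R -> R -> hset R) (alpha : R -> R)
  (I : hset R) : Prop :=
  is_hyperideal hmul I /\
  forall x y, hsubset (hmul x y) I -> I x \/ I (alpha y).

(* Test alpha-primeness on x o y <= I with the residuals I1 = (I : y), which
   contains x, and I2 = (I : I1), which contains y by commutativity.  Both are
   hyperideals and I1 o I2 <= I, so I1 <= I or alpha(I2) <= I, i.e. x is in I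
   or alpha(y) is.  Conversely, pick a in I1 \ I and apply alpha-primeness to
   a o b for each b in I2. *)
From mathcomp Require Import all_boot all_algebra.
From Stdlib Require Import Classical.
Set Implicit Arguments.
Unset Strict Implicit.
Import GRing.Theory.
Local Open Scope ring_scope.

Definition hcolon {R : Type} (hmul : R -> R -> hset R) (I J : hset R) : hset R :=
  fun z => forall w, J w -> hsubset (hmul z w) I.

Section Hyperideals.

Variables (R : zmodType) (hmul : R -> R -> hset R) (I : hset R).
Hypothesis hidealI : is_hyperideal hmul I.

Lemma hyperidealN x : I x -> I (- x).
Proof.
case: hidealI => _ [subI _] Ix.
by have := subI _ _ (subI _ _ Ix Ix) Ix; rewrite subrr sub0r.
Qed.

Lemma hyperidealD x y : I x -> I y -> I (x + y).
Proof.
case: hidealI => _ [subI _] Ix Iy.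
by have := subI _ _ Ix (hyperidealN Iy); rewrite opprK.
Qed.

End Hyperideals.

Section Colon.

Variables (R : zmodType) (hmul : R -> R -> hset R).
Hypotheses (hyperR : is_mult_hyperring hmul) (hmulC : hcommutative hmul).

Lemma hcolon_hyperideal (I J : hset R) :
  is_hyperideal hmul I -> is_hyperideal hmul (hcolon hmul I J).
Proof.
move=> hidealI; have [[x0 Ix0] [_ mulI]] := hidealI.
case: hyperR => _ [hmulA [_ [hmulDr [_ hmulNl]]]].
rewrite /hcolon; split; [|split].
- by exists x0 => w _ t /hmulC; apply: mulI.
- move=> z1 z2 z1I z2I w Jw t /hmulDr [p [q [p_z1w [q_Nz2w ->]]]].
  apply: (hyperidealD hidealI); first exact: (z1I w Jw p p_z1w).
  rewrite -[q]opprK; apply: (hyperidealN hidealI).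
  by apply: z2I Jw _ _; apply/hmulNl.
- move=> r z zI u u_rz w Jw t t_uw.
  have : hprod hmul (hmul r z) (hsingle w) t by exists u, w.
  move/hmulA => [_ [b [-> [b_zw t_rb]]]].
  exact: mulI (zI w Jw b b_zw) t t_rb.
Qed.

Lemma hcolon_bicolon (I J : hset R) : hsubset J (hcolon hmul I (hcolon hmul I J)).
Proof. by move=> w Jw z zI t /hmulC; apply: zI. Qed.

Lemma hprod_hcolon_sub (I J : hset R) : hsubset (hprod hmul J (hcolon hmul I J)) I.
Proof. by move=> t [a [b [Ja [bI /hmulC]]]]; apply: bI. Qed.

End Colon.

Lemma alpha_prime_hprod_sub (R : zmodType) (hmul : R -> R -> hset R)
    (alpha : R -> R) (I I1 I2 : hset R) :
  alpha_prime hmul alpha I -> hsubset (hprod hmul I1 I2) I ->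
  hsubset I1 I \/ hsubset (himage alpha I2) I.
Proof.
move=> [_ primeI] prodI.
case: (classic (exists a, I1 a /\ ~ I a)) => [[a [I1a notIa]] | noa].
- right => _ [b [I2b ->]].
  by case: (primeI a b) => // t t_ab; apply: prodI; exists a, b.
- by left => z I1z; apply: NNPP => notIz; apply: noa; exists z.
Qed.

Theorem mainTheorem6 (R : zmodType) (hmul : R -> R -> hset R) (one : R)
  (alpha : R -> R) (I : hset R) :
  is_mult_hyperring hmul ->
  hcommutative hmul ->
  has_identity hmul one ->
  (forall J, is_hyperideal hmul J -> is_C_hyperideal hmul J) ->
  good_endo hmul alpha ->
  is_hyperideal hmul I ->
  (alpha_prime hmul alpha I <->
   (forall I1 I2, is_hyperideal hmul I1 -> is_hyperideal hmul I2 ->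
      hsubset (hprod hmul I1 I2) I ->
      hsubset I1 I \/ hsubset (himage alpha I2) I)).
Proof.
move=> hyperR hmulC _ _ _ hidealI; split.
  by move=> primeI I1 I2 _ _; apply: alpha_prime_hprod_sub.
move=> prodI; split=> // x y xyI.
pose I1 := hcolon hmul I (hsingle y).
have hidealI1 : is_hyperideal hmul I1 by apply: hcolon_hyperideal.
have hidealI2 : is_hyperideal hmul (hcolon hmul I I1) by apply: hcolon_hyperideal.
have prod_sub := hprod_hcolon_sub (I := I) (J := I1) hmulC.
case: (prodI _ _ hidealI1 hidealI2 prod_sub) => [sub | sub].
  by left; apply: sub => _ ->.
by right; apply: sub; exists y; split=> //; apply: hcolon_bicolon.
Qed.
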